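(* Let $U$ and $V$ be finite-dimensional Euclidean vector spaces of the same dimension and let $\varphi$ be the endomorphism of $U\oplus V$ given in block form by $$\varphi=\begin{pmatrix}\mu\,\mathrm{Id}+A & M^*\\ M & \mu\,\mathrm{Id}+B\end{pmatrix},$$ where $\mu\in(-1,+\infty)$, $A$ and $B$ are symmetric and traceless endomorphisms of $U$ and $V$ respectively, $M:U\to V$ is linear with adjoint $M^*$ (with respect to the inner products), and $\|M(u)\|\geq\|u\|$ for every $u\in U$. Then $\varphi$ has at least one positive eigenvalue.
   Context: All norms and adjoints are taken with respect to the given Euclidean inner products; $\varphi$ is symmetric with respect to the orthogonal direct sum inner product on $U\oplus V$, so its eigenvalues are real. *)

From HB Require Import structures.
From mathcomp Require Import all_boot all_order all_algebra.
Set Implicit Arguments. Unset Strict Implicit. Unset Printing Implicit Defensive.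
Import Order.TTheory GRing.Theory Num.Theory.
Local Open Scope ring_scope.

Definition euclid_norm (R : rcfType) (n : nat) (v : 'cV[R]_n) : R :=
  Num.sqrt (\sum_(i < n) v i 0 ^+ 2).

(* The block endomorphism phi of U (+) V = R^n x R^n, acting on column
   vectors; the adjoint of M (w.r.t. standard inner products) is M^T. *)
Definition phi_mx (R : rcfType) (n : nat) (mu : R) (A B M : 'M[R]_n)
  : 'M[R]_(n + n) :=
  block_mx (mu%:M + A) M^T M (mu%:M + B).

(* Write S = phi_mx mu A B M.  The argument is a trace test: for a hermitian
   matrix H and any rectangular X, if tr (X H X^* ) > 0 then H has a positive
   eigenvalue (otherwise the spectral decomposition H = P^* diag(d) P with all
   d_j <= 0 makes that trace nonpositive).  Since the spectral theorem is only
   available over algebraically closed fields, S is complexified.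

   The test matrix is X = [P | F] with P and F unitary, chosen as follows.  As
   M does not shrink vectors, N N^* >= 1 for N = M^T; diagonalise N N^* by the
   unitary P, with eigenvalues d_j >= 1, and put F = diag(d_j^-1/2) P N, which
   is unitary.  Then F N^* P^* = P N F^* = diag(sqrt d_j), whose trace is
   >= n.  Unitarity kills the traceless blocks A and B, so
   tr (X S X^* ) = 2 n mu + 2 tr diag(sqrt d_j) >= 2 n (mu + 1) > 0. *)

From HB Require Import structures.
From mathcomp Require Import all_boot all_order all_algebra.
From mathcomp Require Import complex ring.
Set Implicit Arguments. Unset Strict Implicit. Unset Printing Implicit Defensive.
Import Order.TTheory GRing.Theory Num.Theory.
Local Open Scope ring_scope.
Local Open Scope sesquilinear_scope.

Local Notation "''[' u ]" := (dotmx u u) : ring_scope.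

Section ComplexSpectral.
Variable C : numClosedFieldType.

Lemma unitarymx_trC n (P : 'M[C]_n) : P \is unitarymx -> P^t* *m P = 1%:M.
Proof. by move=> /unitarymxP /mulmx1C. Qed.

Lemma unitarymx_row_dot m n (P : 'M[C]_(m, n)) j : P \is unitarymx -> '[row j P] = 1.
Proof. by move=> /row_unitarymxP ->; rewrite eqxx. Qed.

Lemma hermitian_spectral_mulmx n (H : 'M[C]_n) : H \is hermsymmx ->
  spectralmx H *m H = diag_mx (spectral_diag H) *m spectralmx H.
Proof.
move=> /hermitian_normalmx /orthomx_spectralP HE.
have /unitarymxP PPt := spectral_unitarymx H.
move: HE PPt; set P := spectralmx H => HE PPt.
by rewrite {1}HE invmx_unitary ?spectral_unitarymx // !mulmxA PPt mul1mx.
Qed.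

Lemma hermitian_spectral_row n (H : 'M[C]_n) j : H \is hermsymmx ->
  row j (spectralmx H) *m H = spectral_diag H 0 j *: row j (spectralmx H).
Proof.
move=> Hh; rewrite -row_mul hermitian_spectral_mulmx // row_mul row_diag_mx.
by rewrite -scalemxAl -rowE.
Qed.

Lemma hermitian_spectral_eigenvalue n (H : 'M[C]_n) j : H \is hermsymmx ->
  eigenvalue H (spectral_diag H 0 j).
Proof.
move=> Hh; apply/eigenvalueP; exists (row j (spectralmx H)).
  exact: hermitian_spectral_row.
apply/eqP => row0; have := unitarymx_row_dot j (spectral_unitarymx H).
by rewrite row0 dotmxE mul0mx mxE => /eqP; rewrite eq_sym oner_eq0.
Qed.

Lemma hermitian_pos_eigenvalue m k (H : 'M[C]_m) (X : 'M[C]_(k, m)) :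
  H \is hermsymmx -> 0 < \tr (X *m H *m X^t*) ->
  exists2 a : C, 0 < a & eigenvalue H a.
Proof.
move=> Hh tr_pos; set P := spectralmx H; set d := spectral_diag H.
have [j d_pos|d_npos] := pickP (fun j => 0 < d 0 j).
  by exists (d 0 j) => //; apply: hermitian_spectral_eigenvalue.
have d_le0 l : d 0 l <= 0.
  have d_real : d 0 l \is Num.real.
    exact: mxOverP (hermitian_spectral_diag_real Hh) 0 l.
  by rewrite real_leNgt ?real0 // d_npos.
have HE : H = P^t* *m diag_mx d *m P.
  by rewrite -mulmxA -hermitian_spectral_mulmx // mulmxA unitarymx_trC ?mul1mx //
     ?spectral_unitarymx.
suff : \tr (X *m H *m X^t*) <= 0 by move/(lt_le_trans tr_pos); rewrite ltxx.
set Y := X *m P^t*.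
have -> : X *m H *m X^t* = Y *m diag_mx d *m Y^t*.
  by rewrite HE /Y !trmx_mul !map_mxM trmxCK !mulmxA.
apply: sumr_le0 => i _; rewrite mul_mx_diag mxE; apply: sumr_le0 => l _.
by rewrite !mxE mulrAC mulr_ge0_le0 ?mul_conjC_ge0.
Qed.

Lemma expanding_unitary_traces n (N : 'M[C]_n) :
  (forall v : 'rV[C]_n, '[v] <= '[v *m N]) ->
  exists P : 'M[C]_n, exists F : 'M[C]_n,
    [/\ P \is unitarymx, F \is unitarymx,
        n%:R <= \tr (F *m N^t* *m P^t*) & n%:R <= \tr (P *m N *m F^t*)].
Proof.
move=> N_expanding; set G := N *m N^t*.
have Gh : G \is hermsymmx.
  by apply/is_hermitianmxP; rewrite expr0 scale1r /G trmx_mul map_mxM trmxCK.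
set P := spectralmx G; set d := spectral_diag G.
have Pu : P \is unitarymx := spectral_unitarymx G.
have d_ge1 j : 1 <= d 0 j.
  have := N_expanding (row j P).
  rewrite unitarymx_row_dot // !dotmxE trmx_mul map_mxM mulmxA -(mulmxA _ N) -/G.
  by rewrite hermitian_spectral_row // -scalemxAl mxE -dotmxE unitarymx_row_dot // mulr1.
pose s j := sqrtC (d 0 j).
have s_ge1 j : 1 <= s j.
  by rewrite -sqrtC1 ler_sqrtC ?nnegrE ?ler01 ?d_ge1 ?(le_trans ler01 (d_ge1 j)).
have s_neq0 j : s j != 0 by rewrite lt0r_neq0 ?(lt_le_trans ltr01 (s_ge1 j)).
have d_sq j : d 0 j = s j * s j by rewrite -expr2 sqrtCK.
pose Sinv := diag_mx (\row_j (s j)^-1).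
have Sinv_herm : Sinv^t* = Sinv.
  rewrite tr_diag_mx map_diag_mx; congr diag_mx; apply/rowP => j; rewrite !mxE.
  by apply: conj_Creal; rewrite realV ger0_real ?(le_trans ler01 (s_ge1 j)).
have PGP : P *m G *m P^t* = diag_mx d.
  by rewrite hermitian_spectral_mulmx // -mulmxA (unitarymxP Pu) mulmx1.
have Sinv_d : Sinv *m diag_mx d = diag_mx (\row_j s j).
  by rewrite mulmx_diag; congr diag_mx; apply/rowP => j; rewrite !mxE d_sq mulKf.
have d_Sinv : diag_mx d *m Sinv = diag_mx (\row_j s j).
  by rewrite mulmx_diag; congr diag_mx; apply/rowP => j; rewrite !mxE d_sq mulfK.
have tr_s : n%:R <= \tr (diag_mx (\row_j s j)).
  rewrite mxtrace_diag; under eq_bigr do rewrite mxE.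
  by apply: le_trans (ler_sum _ (fun j _ => s_ge1 j)); rewrite sumr_const card_ord.
exists P, (Sinv *m P *m N); split => //.
- apply/unitarymxP; rewrite !trmx_mul !map_mxM Sinv_herm !mulmxA.
  have -> : Sinv *m P *m N *m N^t* *m P^t* *m Sinv = Sinv *m diag_mx d *m Sinv.
    by rewrite -PGP /G !mulmxA.
  rewrite Sinv_d mulmx_diag -diag_const_mx; congr diag_mx; apply/rowP => j.
  by rewrite !mxE divff.
- by move: tr_s; rewrite -Sinv_d -PGP /G !mulmxA.
- by move: tr_s; rewrite -d_Sinv -PGP /G !trmx_mul !map_mxM Sinv_herm !mulmxA.
Qed.

End ComplexSpectral.

Section Complexification.
Variable R : rcfType.
Local Notation f := (real_complex R).

Lemma complexified_eigenvalue m (S : 'M[R]_m) (a : R) :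
  eigenvalue (map_mx f S) (f a) -> eigenvalue S a.
Proof. by rewrite !eigenvalue_root_char -map_char_poly fmorph_root. Qed.

Lemma complexified_adjoint m k (S : 'M[R]_(m, k)) : (map_mx f S)^t* = map_mx f S^T.
Proof. by apply/matrixP => i j; rewrite !mxE; exact: conjc_real. Qed.

Lemma symmetric_complexified_hermitian m (S : 'M[R]_m) :
  S^T = S -> map_mx f S \is hermsymmx.
Proof.
by move=> S_sym; apply/is_hermitianmxP; rewrite expr0 scale1r complexified_adjoint S_sym.
Qed.

Lemma complexified_mulmxE n m (p : 'rV[R[i]]_n) (N : 'M[R]_(n, m)) k :
  (p *m map_mx f N) 0 k =
  Complex (\sum_j complex.Re (p 0 j) * N j k) (\sum_j complex.Im (p 0 j) * N j k).
Proof.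
rewrite mxE; elim/big_rec3: _ => [//|j x y u _ ->].
rewrite mxE; case: (p 0 j) => a b /=.
by apply/eqP; rewrite eq_complex /=; apply/andP; split; apply/eqP; ring.
Qed.

Lemma complexified_dotmxE n (p : 'rV[R[i]]_n) :
  '[p] = f (\sum_k (complex.Re (p 0 k) ^+ 2 + complex.Im (p 0 k) ^+ 2)).
Proof.
rewrite dotmxE mxE rmorph_sum; apply: eq_bigr => k _; rewrite !mxE.
case: (p 0 k) => a b /=.
by apply/eqP; rewrite eq_complex /=; apply/andP; split; apply/eqP; ring.
Qed.

Lemma euclid_norm_le n (u v : 'cV[R]_n) :
  (euclid_norm u <= euclid_norm v) = (\sum_k u k 0 ^+ 2 <= \sum_k v k 0 ^+ 2).
Proof. by rewrite /euclid_norm ler_sqrt // sumr_ge0 // => k _; rewrite sqr_ge0. Qed.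

(* A real matrix M that does not shrink column vectors yields a complex matrix
   M^T that does not shrink row vectors (apply the hypothesis to the real and
   imaginary parts separately). *)
Lemma complexified_expanding n (M : 'M[R]_n) :
  (forall u : 'cV[R]_n, euclid_norm u <= euclid_norm (M *m u)) ->
  forall p : 'rV[R[i]]_n, '[p] <= '[p *m map_mx f M^T].
Proof.
move=> M_expanding p; rewrite !complexified_dotmxE lecR !big_split /=.
pose a : 'cV[R]_n := \col_j complex.Re (p 0 j).
pose b : 'cV[R]_n := \col_j complex.Im (p 0 j).
have image_col k : (p *m map_mx f M^T) 0 k = Complex ((M *m a) k 0) ((M *m b) k 0).
  rewrite complexified_mulmxE !mxE.
  by congr Complex; apply: eq_bigr => j _; rewrite /a /b !mxE mulrC.
under [X in _ <= X + _]eq_bigr do rewrite image_col.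
under [X in _ <= _ + X]eq_bigr do rewrite image_col.
have sq_expanding (u : 'cV[R]_n) : \sum_k u k 0 ^+ 2 <= \sum_k (M *m u) k 0 ^+ 2.
  by rewrite -euclid_norm_le.
apply: lerD.
  by apply: le_trans (sq_expanding a); apply: ler_sum => k _; rewrite /a mxE.
by apply: le_trans (sq_expanding b); apply: ler_sum => k _; rewrite /b mxE.
Qed.

Lemma symmetric_pos_eigenvalue m k (S : 'M[R]_m) (X : 'M[R[i]]_(k, m)) :
  S^T = S -> 0 < \tr (X *m map_mx f S *m X^t*) ->
  exists2 a : R, 0 < a & eigenvalue S a.
Proof.
move=> S_sym /(hermitian_pos_eigenvalue (symmetric_complexified_hermitian S_sym)).
case=> -[x y]; rewrite ltcE /= => /andP [/eqP -> x_pos] eig_x.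
by exists x => //; apply: complexified_eigenvalue.
Qed.

End Complexification.

Lemma doubled_shifted_sum_pos (K : numDomainType) n (m T1 T2 : K) :
  (0 < n)%N -> -1 < m -> n%:R <= T1 -> n%:R <= T2 ->
  0 < m *+ n + T1 + (T2 + m *+ n).
Proof.
move=> n_gt0 m_gt T1_ge T2_ge.
have m1_pos : 0 < (m + 1) *+ n by rewrite pmulrn_lgt0 // -ltrBlDr sub0r.
apply: lt_le_trans (addr_gt0 m1_pos m1_pos) _.
by rewrite mulrnDl [T2 + _]addrC; apply: lerD; apply: lerD.
Qed.

Section BlockOperator.
Variables (R : rcfType) (n : nat) (mu : R) (A B M : 'M[R]_n).
Local Notation f := (real_complex R).

Lemma phi_mx_sym : A^T = A -> B^T = B -> (phi_mx mu A B M)^T = phi_mx mu A B M.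
Proof.
move=> A_sym B_sym.
by rewrite /phi_mx tr_block_mx trmxK !linearD /= !tr_scalar_mx A_sym B_sym.
Qed.

(* The quadratic trace of phi against [P | F], P and F unitary: conjugation by
   unitaries preserves the traces of the diagonal blocks. *)
Lemma phi_mx_trace_form (P F : 'M[R[i]]_n) : P \is unitarymx -> F \is unitarymx ->
  \tr (row_mx P F *m map_mx f (phi_mx mu A B M) *m (row_mx P F)^t*) =
  f (mu *+ n + \tr A) + \tr (F *m map_mx f M *m P^t*)
    + (\tr (P *m map_mx f M^T *m F^t*) + f (mu *+ n + \tr B)).
Proof.
move=> Pu Fu; rewrite /phi_mx map_block_mx tr_row_mx map_col_mx.
rewrite mul_row_block mul_row_col !mulmxDl !mxtraceD.
rewrite [\tr (P *m _ *m _)]mxtrace_mulC mulmxA unitarymx_trC // mul1mx.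
rewrite [\tr (F *m map_mx f (_ + B) *m _)]mxtrace_mulC mulmxA unitarymx_trC // mul1mx.
by rewrite !trace_map_mx !mxtraceD !mxtrace_scalar.
Qed.

End BlockOperator.

Theorem mainTheorem15 (R : rcfType) (n : nat) (mu : R) (A B M : 'M[R]_n) :
  (0 < n)%N ->
  -1 < mu ->
  A^T = A -> B^T = B ->
  \tr A = 0 -> \tr B = 0 ->
  (forall u : 'cV[R]_n, euclid_norm u <= euclid_norm (M *m u)) ->
  exists2 lambda : R, 0 < lambda & eigenvalue (phi_mx mu A B M)^T lambda.
Proof.
move=> n_gt0 mu_gt A_sym B_sym trA trB M_expanding.
have S_sym := phi_mx_sym mu M A_sym B_sym; rewrite S_sym.
have [P [F [Pu Fu trFMP trPMF]]] :=
  expanding_unitary_traces (complexified_expanding M_expanding).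
apply: (symmetric_pos_eigenvalue (X := row_mx P F) S_sym).
rewrite (phi_mx_trace_form mu A B M Pu Fu) trA trB !addr0 rmorphMn.
have muC_gt : -1 < real_complex R mu.
  by rewrite -(rmorph1 (real_complex R)) -rmorphN ltcR.
rewrite complexified_adjoint trmxK in trFMP.
exact: doubled_shifted_sum_pos n_gt0 muC_gt trFMP trPMF.
Qed.
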